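(* Let $x$ be a reference grid point in $\Omega=(-1,1)$ and $\phi$ a twice differentiable function defined in a neighborhood of the grid. Assume $K=\mathcal O(h^{-\alpha})$ and $L=\mathcal O(h^{-\beta})$ with $K\sqrt L\ge1$, $\alpha\in(0,1)$ and $\beta\in(0,2)$. Then the scheme $F^{1D,e,\delta}$ is consistent with $F^{1D}$ and has accuracy \[ F^{1D,e,\delta}[\phi](x)-F^{1D}[\phi](x)=\mathcal O\left(h^{1-\alpha}+h^{2-\beta}+h^{\min(2\alpha,\beta/2)}\right). \] Moreover, the optimal choice of $\alpha$ and $\beta$ (maximizing the resulting order) is $\alpha=1/3$, $\beta=4/3$, in which case the accuracy is $\mathcal O(h^{2/3})$.
   Context: $F^{1D}[u]=(u_x^2u_{xx})^{1/3}$ (real cube root). With $A(p,q)=(p^2q)^{1/3}$, $A^\delta(p,q)=\operatorname{sgn}(q)\min(\lvert A(p,q)\rvert,K\lvert p\rvert,L\lvert q\rvert)$ ($\operatorname{sgn}(0)=0$), $A^{\delta,\pm}(p,q)=A^\delta(p^\pm,q^\pm)$ where $x^+=\max(x,0)$, $x^-=\min(x,0)$, the scheme on the uniform grid of spacing $h$ is $-F^{1D,e,\delta}[u]=A^{\delta,+}(\lvert u_x^h\rvert^+,-u_{xx}^h)+A^{\delta,-}(-\lvert u_x^h\rvert^-,-u_{xx}^h)$, with $\lvert u_x^h\rvert^+=\max\{\frac{u(x)-u(x+h)}h,\frac{u(x)-u(x-h)}h,0\}$, $-\lvert u_x^h\rvert^-=\min\{\frac{u(x)-u(x+h)}h,\frac{u(x)-u(x-h)}h,0\}$,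 $u_{xx}^h=\frac{u(x+h)-2u(x)+u(x-h)}{h^2}$. Consistency with $F$ means $\lim_{h\to0,\,y\to x}F^h[\phi](y)=F[\phi](x)$ for smooth $\phi$.
   Formalization: φ is C^∞ on some (−1−r, 1+r) instead of twice differentiable, K and L lie between positive multiples of $h^{-\alpha}$ and $h^{-\beta}$ for small h, and the error bound holds uniformly in x ∈ (−1,1). Apart from conventions, each condition added here is assumed in the paper as well or is needed for the statement above to hold. *)

From Stdlib Require Import Reals Lra.
From Coquelicot Require Import Coquelicot.
Open Scope R_scope.

Definition sgn (x : R) : R :=
  if Rlt_dec 0 x then 1 else if Rlt_dec x 0 then -1 else 0.

Definition cbrt (x : R) : R :=
  if Rlt_dec 0 x then Rpower x (1/3)
  else if Rlt_dec x 0 then - Rpower (- x) (1/3) else 0.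

Definition A (p q : R) : R := cbrt (p ^ 2 * q).

Definition Adelta (K L p q : R) : R :=
  sgn q * Rmin (Rabs (A p q)) (Rmin (K * Rabs p) (L * Rabs q)).

Definition pos_part (x : R) : R := Rmax x 0.
Definition neg_part (x : R) : R := Rmin x 0.

Definition Adelta_plus (K L p q : R) : R := Adelta K L (pos_part p) (pos_part q).
Definition Adelta_minus (K L p q : R) : R := Adelta K L (neg_part p) (neg_part q).

Definition dback (u : R -> R) (h x : R) : R := (u x - u (x + h)) / h.
Definition dfwd  (u : R -> R) (h x : R) : R := (u x - u (x - h)) / h.
Definition grad_plus (u : R -> R) (h x : R) : R :=
  Rmax (Rmax (dback u h x) (dfwd u h x)) 0.
Definition mgrad_minus (u : R -> R) (h x : R) : R :=
  Rmin (Rmin (dback u h x) (dfwd u h x)) 0.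
Definition uxx (u : R -> R) (h x : R) : R :=
  (u (x + h) - 2 * u x + u (x - h)) / h ^ 2.

Definition F_scheme (K L h : R) (u : R -> R) (x : R) : R :=
  - (Adelta_plus K L (grad_plus u h x) (- uxx u h x)
     + Adelta_minus K L (mgrad_minus u h x) (- uxx u h x)).

Definition F1D (u : R -> R) (x : R) : R :=
  cbrt ((Derive_n u 1 x) ^ 2 * Derive_n u 2 x).

Definition smooth_on (u : R -> R) (a b : R) : Prop :=
  forall (n : nat) (y : R), a < y < b -> ex_derive (Derive_n u n) y.

(** Convergence order of h^(1-a) + h^(2-b) + h^(min(2a, b/2)) as h -> 0. *)
Definition order (a b : R) : R := Rmin (Rmin (1 - a) (2 - b)) (Rmin (2 * a) (b / 2)).

(* Only one of the two terms of the scheme is nonzero, so the scheme equals [-A^delta(P, Q)]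
   with [P] a one-sided discrete gradient and [Q = -u_xx^h], while [F^1D[phi] = -A(|phi'|, -phi'')].
   Taylor expansion gives [P - |phi'| = O(h)] and [Q + phi'' = O(h^2)]; the cube root is
   1/3-Hoelder, hence [A(P, Q) - A(|phi'|, -phi'') = O(h^(2/3))]. The truncation costs at most
   [|Q|/K^2 + P/sqrt L = O(h^(2 alpha) + h^(beta/2))], and [h^(2/3) <= h^(1-alpha) + h^(2 alpha)]. Consistency then follows from this uniform
   bound and the continuity of [F^1D[phi]]. *)

From Stdlib Require Import Reals Lra Psatz.
From Coquelicot Require Import Coquelicot.
Open Scope R_scope.

Lemma pow3_lt_compat a b : a < b -> a ^ 3 < b ^ 3.
Proof.
  intro Hab.
  assert (Hpos : 0 < (a + b / 2) ^ 2 + 3 / 4 * b ^ 2).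
  { pose proof (pow2_ge_0 (a + b / 2)).
    destruct (Req_dec b 0) as [->|Hb]; [nra|].
    assert (0 < b ^ 2) by (apply pow2_gt_0; exact Hb). lra. }
  assert (b ^ 3 - a ^ 3 = (b - a) * ((a + b / 2) ^ 2 + 3 / 4 * b ^ 2)) by field.
  nra.
Qed.

Lemma pow3_le_reg a b : a ^ 3 <= b ^ 3 -> a <= b.
Proof.
  intro H. destruct (Rle_lt_dec a b) as [|Hba]; [assumption|].
  apply pow3_lt_compat in Hba. lra.
Qed.

Lemma pow3_lt_reg a b : a ^ 3 < b ^ 3 -> a < b.
Proof.
  intro H. destruct (Rlt_le_dec a b) as [|Hba]; [assumption|].
  destruct Hba as [Hba | ->]; [apply pow3_lt_compat in Hba|]; lra.
Qed.

Lemma pow3_inj a b : a ^ 3 = b ^ 3 -> a = b.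
Proof. intro H. apply Rle_antisym; apply pow3_le_reg; lra. Qed.

Lemma cbrt_pow3 x : cbrt x ^ 3 = x.
Proof.
  assert (Hcube : forall y, 0 < y -> Rpower y (1 / 3) ^ 3 = y).
  { intros y Hy. rewrite <- Rpower_pow by apply exp_pos.
    rewrite Rpower_mult. replace (1 / 3 * INR 3) with 1 by (simpl; field).
    now apply Rpower_1. }
  unfold cbrt. destruct (Rlt_dec 0 x); [now apply Hcube|].
  destruct (Rlt_dec x 0); [|simpl; lra].
  replace ((- Rpower (- x) (1 / 3)) ^ 3) with (- Rpower (- x) (1 / 3) ^ 3) by ring.
  rewrite Hcube; lra.
Qed.

Lemma pow3_cbrt y : cbrt (y ^ 3) = y.
Proof. apply pow3_inj, cbrt_pow3. Qed.

Lemma cbrt_mul a b : cbrt (a * b) = cbrt a * cbrt b.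
Proof. apply pow3_inj. now rewrite Rpow_mult_distr, !cbrt_pow3. Qed.

Lemma cbrt_pow a n : cbrt (a ^ n) = cbrt a ^ n.
Proof.
  induction n as [|n IH]; simpl.
  - rewrite <- (pow3_cbrt 1) at 2. f_equal. ring.
  - now rewrite cbrt_mul, IH.
Qed.

Lemma cbrt_opp a : cbrt (- a) = - cbrt a.
Proof.
  apply pow3_inj. replace ((- cbrt a) ^ 3) with (- cbrt a ^ 3) by ring.
  now rewrite !cbrt_pow3.
Qed.

Lemma cbrt_abs a : cbrt (Rabs a) = Rabs (cbrt a).
Proof. apply pow3_inj. now rewrite RPow_abs, !cbrt_pow3. Qed.

Lemma cbrt_le a b : a <= b -> cbrt a <= cbrt b.
Proof. intro H. apply pow3_le_reg. now rewrite !cbrt_pow3. Qed.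

Lemma cbrt_lt a b : a < b -> cbrt a < cbrt b.
Proof. intro H. apply pow3_lt_reg. now rewrite !cbrt_pow3. Qed.

Lemma cbrt_0 : cbrt 0 = 0.
Proof. unfold cbrt. destruct (Rlt_dec 0 0); [lra|]. now destruct (Rlt_dec 0 0); [lra|]. Qed.

Lemma cbrt_ge0 a : 0 <= a -> 0 <= cbrt a.
Proof. intro H. rewrite <- cbrt_0. now apply cbrt_le. Qed.

Lemma cbrt_sqr_Rpower a : 0 < a -> cbrt a ^ 2 = Rpower a (2 / 3).
Proof.
  intro Ha. unfold cbrt. destruct (Rlt_dec 0 a); [|lra].
  replace (2 / 3) with (1 / 3 + 1 / 3) by field. rewrite Rpower_plus. ring.
Qed.

Lemma pow3_sub_le s t : Rabs (s - t) ^ 3 <= 4 * Rabs (s ^ 3 - t ^ 3).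
Proof.
  pose proof (pow2_ge_0 (s + t)). pose proof (pow2_ge_0 (s - t)).
  assert (Hq : (s - t) ^ 2 <= 4 * (s ^ 2 + s * t + t ^ 2)) by nra.
  assert (Hq0 : 0 <= s ^ 2 + s * t + t ^ 2) by nra.
  replace (s ^ 3 - t ^ 3) with ((s - t) * (s ^ 2 + s * t + t ^ 2)) by ring.
  rewrite Rabs_mult, (Rabs_pos_eq (_ + _)) by lra.
  replace (Rabs (s - t) ^ 3) with (Rabs (s - t) * (s - t) ^ 2)
    by (rewrite <- (pow2_abs (s - t)); ring).
  pose proof (Rabs_pos (s - t)). nra.
Qed.

Lemma cbrt_sub_le a b : Rabs (cbrt a - cbrt b) <= 2 * cbrt (Rabs (a - b)).
Proof.
  apply pow3_le_reg. rewrite Rpow_mult_distr, cbrt_pow3.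
  pose proof (pow3_sub_le (cbrt a) (cbrt b)) as H. rewrite !cbrt_pow3 in H.
  simpl (2 ^ 3). pose proof (Rabs_pos (a - b)). lra.
Qed.

(* Uses [|s - t| <= s + t], which is where [s, t >= 0] enters. *)
Lemma pow2_sub_pow3_le s t : 0 <= s -> 0 <= t ->
  Rabs (s ^ 2 - t ^ 2) ^ 3 <= 8 * (s ^ 3 - t ^ 3) ^ 2.
Proof.
  intros Hs Ht.
  replace (s ^ 2 - t ^ 2) with ((s - t) * (s + t)) by ring.
  replace ((s ^ 3 - t ^ 3) ^ 2) with ((s - t) ^ 2 * (s ^ 2 + s * t + t ^ 2) ^ 2) by ring.
  rewrite Rabs_mult, (Rabs_pos_eq (s + t)), <- (pow2_abs (s - t)) by lra.
  set (d := Rabs (s - t)).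
  assert (Hd : 0 <= d <= s + t) by (split; [apply Rabs_pos|apply Rabs_le; lra]).
  assert (Hst : (s + t) ^ 4 <= 8 * (s ^ 2 + s * t + t ^ 2) ^ 2) by nra.
  assert (Hd3 : d * (s + t) ^ 3 <= (s + t) ^ 4).
  { replace ((s + t) ^ 4) with ((s + t) * (s + t) ^ 3) by ring.
    apply Rmult_le_compat_r; [apply pow_le|]; lra. }
  replace ((d * (s + t)) ^ 3) with (d ^ 2 * (d * (s + t) ^ 3)) by ring.
  replace (8 * (d ^ 2 * (s ^ 2 + s * t + t ^ 2) ^ 2))
    with (d ^ 2 * (8 * (s ^ 2 + s * t + t ^ 2) ^ 2)) by ring.
  apply Rmult_le_compat_l; [apply pow2_ge_0|lra].
Qed.

Lemma cbrt_sqr_sub_le a b : 0 <= a -> 0 <= b ->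
  Rabs (cbrt a ^ 2 - cbrt b ^ 2) <= 2 * cbrt (Rabs (a - b)) ^ 2.
Proof.
  intros Ha Hb. apply pow3_le_reg.
  pose proof (pow2_sub_pow3_le _ _ (cbrt_ge0 _ Ha) (cbrt_ge0 _ Hb)) as H.
  rewrite !cbrt_pow3 in H.
  replace ((2 * cbrt (Rabs (a - b)) ^ 2) ^ 3) with (8 * (cbrt (Rabs (a - b)) ^ 3) ^ 2) by ring.
  now rewrite cbrt_pow3, pow2_abs.
Qed.

Lemma continuity_cbrt x : continuity_pt cbrt x.
Proof.
  apply continuity_pt_locally. intros [eps Heps].
  assert (Hd : 0 < (eps / 2) ^ 3) by (apply pow_lt; lra).
  exists (mkposreal _ Hd). intros y Hy. change (Rabs (y - x) < (eps / 2) ^ 3) in Hy.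
  assert (cbrt (Rabs (y - x)) < eps / 2)
    by (rewrite <- (pow3_cbrt (eps / 2)); now apply cbrt_lt).
  pose proof (cbrt_sub_le y x). simpl. lra.
Qed.

Lemma sgn_abs_le1 q : Rabs (sgn q) <= 1.
Proof.
  unfold sgn. destruct Rlt_dec; [|destruct Rlt_dec];
    unfold Rabs; destruct Rcase_abs; lra.
Qed.

Lemma A_eq p q : A p q = cbrt p ^ 2 * cbrt q.
Proof. unfold A. replace (p ^ 2 * q) with (p * (p * q)) by ring. rewrite !cbrt_mul. ring. Qed.

Lemma sgn_mul_abs_A p q : sgn q * Rabs (A p q) = A p q.
Proof.
  rewrite A_eq, Rabs_mult, <- RPow_abs, pow2_abs.
  unfold sgn. destruct (Rlt_dec 0 q) as [Hq|]; [|destruct (Rlt_dec q 0) as [Hq|Hq]].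
  - rewrite Rabs_pos_eq by (apply cbrt_ge0; lra). ring.
  - rewrite Rabs_left by (rewrite <- cbrt_0; now apply cbrt_lt). ring.
  - replace q with 0 by lra. rewrite cbrt_0. ring.
Qed.

Lemma Adelta_opp_l K L p q : Adelta K L (- p) q = Adelta K L p q.
Proof. unfold Adelta, A. now rewrite Rabs_Ropp, <- Rsqr_pow2, <- Rsqr_neg, Rsqr_pow2. Qed.

Lemma Adelta_0_r K L p : Adelta K L p 0 = 0.
Proof.
  unfold Adelta, sgn. destruct (Rlt_dec 0 0); [lra|]. destruct (Rlt_dec 0 0); [lra|ring].
Qed.

(* With [s = cbrt P] and [w = cbrt |Q|] the three competitors in [Adelta] are [|A| = s^2 w],
   [K P = K s^3] and [L |Q| = (sqrt L)^2 w^3]. A cut-off is active only when [K s < w] or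
   [l w < s], and then [s^2 w] is small. *)
Lemma truncation_gap_le K l s w : 0 < K -> 0 < l -> 0 <= s -> 0 <= w ->
  s ^ 2 * w - Rmin (s ^ 2 * w) (Rmin (K * s ^ 3) (l ^ 2 * w ^ 3)) <= w ^ 3 / K ^ 2 + s ^ 3 / l.
Proof.
  intros HK Hl Hs Hw.
  assert (HwK : 0 <= w ^ 3 / K ^ 2) by (apply Rdiv_le_0_compat; [apply pow_le|apply pow_lt]; lra).
  assert (Hsl : 0 <= s ^ 3 / l) by (apply Rdiv_le_0_compat; [apply pow_le|]; lra).
  unfold Rmin. destruct (Rle_dec (K * s ^ 3) (l ^ 2 * w ^ 3));
    destruct (Rle_dec (s ^ 2 * w)); try lra.
  - assert (Hs0 : 0 < s) by (destruct Hs as [|<-]; [|nra]; assumption).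
    assert (HKs : K * s < w) by nra.
    assert (s ^ 2 * w <= w ^ 3 / K ^ 2).
    { apply (Rmult_le_reg_r (K ^ 2)); [apply pow_lt; lra|].
      replace (w ^ 3 / K ^ 2 * K ^ 2) with (w ^ 2 * w) by (field; lra).
      replace (s ^ 2 * w * K ^ 2) with ((K * s) ^ 2 * w) by ring.
      apply Rmult_le_compat_r; [lra|]. apply pow_incr. nra. }
    assert (0 <= K * s ^ 3) by (apply Rmult_le_pos; [|apply pow_le]; lra). lra.
  - assert (Hw0 : 0 < w) by (destruct Hw as [|<-]; [|nra]; assumption).
    assert (Hlw : l * w < s) by (assert ((l * w) ^ 2 < s ^ 2) by nra; nra).
    assert (s ^ 2 * w <= s ^ 3 / l).
    { apply (Rmult_le_reg_r l); [lra|].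
      replace (s ^ 3 / l * l) with (s ^ 2 * s) by (field; lra). nra. }
    assert (0 <= l ^ 2 * w ^ 3) by (apply Rmult_le_pos; apply pow_le; lra). lra.
Qed.

Lemma Adelta_sub_A K L P Q : 0 < K -> 0 < L -> 0 <= P ->
  Rabs (Adelta K L P Q - A P Q) <= Rabs Q / K ^ 2 + P / sqrt L.
Proof.
  intros HK HL HP.
  set (s := cbrt P). set (w := cbrt (Rabs Q)).
  assert (Hs : 0 <= s) by (apply cbrt_ge0; lra).
  assert (Hw : 0 <= w) by (apply cbrt_ge0, Rabs_pos).
  assert (HA : Rabs (A P Q) = s ^ 2 * w).
  { now rewrite A_eq, Rabs_mult, <- RPow_abs, pow2_abs, <- cbrt_abs. }
  assert (Hgap := truncation_gap_le K (sqrt L) s w HK (sqrt_lt_R0 _ HL) Hs Hw).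
  unfold s, w in Hgap. rewrite !cbrt_pow3, pow2_sqrt in Hgap by lra. fold s w in Hgap.
  rewrite <- HA in Hgap.
  unfold Adelta. rewrite (Rabs_pos_eq P) by lra. rewrite <- (sgn_mul_abs_A P Q) at 2.
  rewrite <- Rmult_minus_distr_l, Rabs_mult.
  set (m := Rmin _ _) in *.
  assert (Hm : m <= Rabs (A P Q)) by apply Rmin_l.
  rewrite Rabs_minus_sym, (Rabs_pos_eq (_ - m)) by lra.
  pose proof (sgn_abs_le1 Q). pose proof (Rabs_pos (sgn Q)). nra.
Qed.

Lemma A_sub_A P p Q q : 0 <= P -> 0 <= p ->
  Rabs (A P Q - A p q)
  <= 2 * cbrt (Rabs (P - p)) ^ 2 * cbrt (Rabs Q) + 2 * cbrt p ^ 2 * cbrt (Rabs (Q - q)).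
Proof.
  intros HP Hp. rewrite !A_eq.
  replace (cbrt P ^ 2 * cbrt Q - cbrt p ^ 2 * cbrt q)
    with ((cbrt P ^ 2 - cbrt p ^ 2) * cbrt Q + cbrt p ^ 2 * (cbrt Q - cbrt q)) by ring.
  eapply Rle_trans; [apply Rabs_triang|]. rewrite !Rabs_mult, <- cbrt_abs.
  rewrite (Rabs_pos_eq (cbrt p ^ 2)) by apply pow2_ge_0.
  apply Rplus_le_compat.
  - apply Rmult_le_compat_r; [apply cbrt_ge0, Rabs_pos|]. now apply cbrt_sqr_sub_le.
  - replace (2 * cbrt p ^ 2 * cbrt (Rabs (Q - q)))
      with (cbrt p ^ 2 * (2 * cbrt (Rabs (Q - q)))) by ring.
    apply Rmult_le_compat_l; [apply pow2_ge_0|]. apply cbrt_sub_le.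
Qed.

(* Since [sgn 0 = 0], the sign of [-u_xx^h] switches off one of the two terms. *)
Lemma F_scheme_single_term K L h u x :
  exists P, 0 <= P /\ (P = grad_plus u h x \/ P = - mgrad_minus u h x) /\
  F_scheme K L h u x = - Adelta K L P (- uxx u h x).
Proof.
  set (Q := - uxx u h x). set (gp := grad_plus u h x). set (gm := mgrad_minus u h x).
  assert (Hgp : 0 <= gp) by apply Rmax_r.
  assert (Hgm : gm <= 0) by apply Rmin_r.
  unfold F_scheme, Adelta_plus, Adelta_minus, pos_part, neg_part. fold Q gp gm.
  destruct (Rtotal_order Q 0) as [HQ|[HQ|HQ]].
  - exists (- gm). repeat split; [lra|now right|].
    rewrite (Rmax_right Q), (Rmin_left Q), (Rmin_left gm), Adelta_0_r, Adelta_opp_l by lra.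
    ring.
  - exists gp. repeat split; [lra|now left|].
    rewrite HQ, (Rmax_left 0 0), (Rmin_left 0 0), !Adelta_0_r by lra. ring.
  - exists gp. repeat split; [lra|now left|].
    rewrite (Rmax_left Q), (Rmin_right Q), (Rmax_left gp), Adelta_0_r by lra. ring.
Qed.

Lemma F1D_eq u x : F1D u x = - A (Rabs (Derive_n u 1 x)) (- Derive_n u 2 x).
Proof. unfold F1D, A. rewrite pow2_abs, <- cbrt_opp. f_equal. ring. Qed.

Lemma Derive_n_Derive_n u m j : Derive_n (Derive_n u m) j = Derive_n u (j + m).
Proof. induction j as [|j IH]; [reflexivity|]. simpl. now rewrite IH. Qed.

Lemma smooth_on_ex_derive_n u a b m k t :
  smooth_on u a b -> a < t < b -> ex_derive_n (Derive_n u m) k t.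
Proof.
  intros Hu Ht. destruct k as [|k]; [exact I|]. simpl. rewrite Derive_n_Derive_n. now apply Hu.
Qed.

Section TaylorLagrange.
Variables (f : R -> R) (x y : R).
Hypothesis Hxy : x < y.
Hypothesis Hf : forall k t, x <= t <= y -> ex_derive_n f k t.

Lemma taylor_lagrange_0 : exists z, x < z < y /\ f y = f x + (y - x) * Derive_n f 1 z.
Proof.
  destruct (Taylor_Lagrange f 0 x y Hxy) as [z [Hz E]]; [intros; now apply Hf|].
  exists z. split; [assumption|]. rewrite E. simpl. field.
Qed.

Lemma taylor_lagrange_1 : exists z, x < z < y /\
  f y = f x + (y - x) * Derive_n f 1 x + (y - x) ^ 2 / 2 * Derive_n f 2 z.
Proof.
  destruct (Taylor_Lagrange f 1 x y Hxy) as [z [Hz E]]; [intros; now apply Hf|].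
  exists z. split; [assumption|]. rewrite E. simpl. field.
Qed.

Lemma taylor_lagrange_3 : exists z, x < z < y /\
  f y = f x + (y - x) * Derive_n f 1 x + (y - x) ^ 2 / 2 * Derive_n f 2 x
        + (y - x) ^ 3 / 6 * Derive_n f 3 x + (y - x) ^ 4 / 24 * Derive_n f 4 z.
Proof.
  destruct (Taylor_Lagrange f 3 x y Hxy) as [z [Hz E]]; [intros; now apply Hf|].
  exists z. split; [assumption|]. rewrite E. simpl. field.
Qed.

End TaylorLagrange.

Lemma Rmax3_sub_le a b c d e : Rabs (a - c) <= e -> Rabs (b - d) <= e ->
  Rabs (Rmax (Rmax a b) 0 - Rmax (Rmax c d) 0) <= e.
Proof.
  unfold Rmax. repeat destruct Rle_dec; unfold Rabs; repeat destruct Rcase_abs; lra.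
Qed.

Lemma Rmin3_sub_le a b c d e : Rabs (a - c) <= e -> Rabs (b - d) <= e ->
  Rabs (- Rmin (Rmin a b) 0 - - Rmin (Rmin c d) 0) <= e.
Proof.
  unfold Rmin. repeat destruct Rle_dec; unfold Rabs; repeat destruct Rcase_abs; lra.
Qed.

Section GridEstimates.
Variables (u : R -> R) (a b x h M : R).
Hypothesis Hu : smooth_on u a b.
Hypothesis Hgrid : a < x - h /\ x + h < b.
Hypothesis Hh : 0 < h.
Hypothesis HM : forall t, x - h <= t <= x + h ->
  Rabs (Derive_n u 2 t) <= M /\ Rabs (Derive_n u 4 t) <= M.

Let ex_derive_n_grid m : forall k t, x - h <= t <= x + h -> ex_derive_n (Derive_n u m) k t.
Proof. intros k t Ht. apply (smooth_on_ex_derive_n u a b); [assumption|lra]. Qed.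

Let ex_derive_n_grid0 : forall k t, x - h <= t <= x + h -> ex_derive_n u k t.
Proof. exact (ex_derive_n_grid 0). Qed.

Lemma dback_err : Rabs (dback u h x + Derive_n u 1 x) <= M * h.
Proof.
  destruct (taylor_lagrange_1 u x (x + h)) as [z [Hz E]];
    [lra|intros k t Ht; apply ex_derive_n_grid0; lra|].
  unfold dback. rewrite E. replace (x + h - x) with h by ring.
  match goal with |- Rabs ?e <= _ =>
    replace e with (- (h / 2) * Derive_n u 2 z) by (field; lra) end.
  rewrite Rabs_mult, Rabs_Ropp, Rabs_pos_eq by lra.
  pose proof (proj1 (HM z ltac:(lra))). pose proof (Rabs_pos (Derive_n u 2 z)). nra.
Qed.

Lemma dfwd_err : Rabs (dfwd u h x - Derive_n u 1 x) <= 2 * M * h.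
Proof.
  destruct (taylor_lagrange_1 u (x - h) x) as [z1 [Hz1 E1]];
    [lra|intros k t Ht; apply ex_derive_n_grid0; lra|].
  destruct (taylor_lagrange_0 (Derive_n u 1) (x - h) x) as [z2 [Hz2 E2]];
    [lra|intros k t Ht; apply ex_derive_n_grid; lra|].
  change (Derive_n (Derive_n u 1) 1 z2) with (Derive_n u 2 z2) in E2.
  unfold dfwd. rewrite E1, E2. replace (x - (x - h)) with h by ring.
  match goal with |- Rabs ?e <= _ =>
    replace e with (h * (/ 2 * Derive_n u 2 z1 - Derive_n u 2 z2)) by (field; lra) end.
  rewrite Rabs_mult, (Rabs_pos_eq h) by lra.
  assert (Rabs (/ 2 * Derive_n u 2 z1 - Derive_n u 2 z2) <= 2 * M).
  { pose proof (proj1 (HM z1 ltac:(lra))). pose proof (proj1 (HM z2 ltac:(lra))).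
    eapply Rle_trans; [apply Rabs_triang|].
    rewrite Rabs_Ropp, Rabs_mult, (Rabs_pos_eq (/ 2)) by lra.
    pose proof (Rabs_pos (Derive_n u 2 z1)). lra. }
  nra.
Qed.

Lemma uxx_err : Rabs (uxx u h x - Derive_n u 2 x) <= 2 * M * h ^ 2.
Proof.
  destruct (taylor_lagrange_3 u (x - h) (x + h)) as [z1 [Hz1 E1]];
    [lra|intros k t Ht; apply ex_derive_n_grid0; lra|].
  destruct (taylor_lagrange_3 u (x - h) x) as [z2 [Hz2 E2]];
    [lra|intros k t Ht; apply ex_derive_n_grid0; lra|].
  destruct (taylor_lagrange_1 (Derive_n u 2) (x - h) x) as [z3 [Hz3 E3]];
    [lra|intros k t Ht; apply ex_derive_n_grid; lra|].
  change (Derive_n (Derive_n u 2) 1 (x - h)) with (Derive_n u 3 (x - h)) in E3.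
  change (Derive_n (Derive_n u 2) 2 z3) with (Derive_n u 4 z3) in E3.
  unfold uxx. rewrite E1, E2, E3.
  replace (x + h - (x - h)) with (2 * h) by ring. replace (x - (x - h)) with h by ring.
  match goal with |- Rabs ?e <= _ => replace e with
    (h ^ 2 * (2 / 3 * Derive_n u 4 z1 - / 12 * Derive_n u 4 z2 - / 2 * Derive_n u 4 z3))
    by (field; lra) end.
  rewrite Rabs_mult, (Rabs_pos_eq (h ^ 2)) by (apply pow2_ge_0).
  assert (Rabs (2 / 3 * Derive_n u 4 z1 - / 12 * Derive_n u 4 z2 - / 2 * Derive_n u 4 z3) <= 2 * M).
  { pose proof (proj2 (HM z1 ltac:(lra))). pose proof (proj2 (HM z2 ltac:(lra))).
    pose proof (proj2 (HM z3 ltac:(lra))).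
    unfold Rminus. eapply Rle_trans; [apply Rabs_triang|].
    eapply Rle_trans; [apply Rplus_le_compat_r, Rabs_triang|].
    rewrite !Rabs_Ropp, !Rabs_mult, (Rabs_pos_eq (2 / 3)), (Rabs_pos_eq (/ 12)),
      (Rabs_pos_eq (/ 2)) by lra.
    pose proof (Rabs_pos (Derive_n u 4 z1)). lra. }
  pose proof (pow2_ge_0 h). nra.
Qed.

Lemma one_sided_gradient_err P :
  P = grad_plus u h x \/ P = - mgrad_minus u h x ->
  Rabs (P - Rabs (Derive_n u 1 x)) <= 2 * M * h.
Proof.
  assert (HM0 : 0 <= M)
    by (pose proof (proj1 (HM x ltac:(lra))); pose proof (Rabs_pos (Derive_n u 2 x)); lra).
  assert (Hb : Rabs (dback u h x - - Derive_n u 1 x) <= 2 * M * h).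
  { pose proof dback_err. unfold Rminus. rewrite Ropp_involutive. nra. }
  pose proof dfwd_err.
  intros [-> | ->].
  - replace (Rabs (Derive_n u 1 x)) with (Rmax (Rmax (- Derive_n u 1 x) (Derive_n u 1 x)) 0)
      by (unfold Rmax; repeat destruct Rle_dec; unfold Rabs; destruct Rcase_abs; lra).
    now apply Rmax3_sub_le.
  - replace (Rabs (Derive_n u 1 x)) with (- Rmin (Rmin (- Derive_n u 1 x) (Derive_n u 1 x)) 0)
      by (unfold Rmin; repeat destruct Rle_dec; unfold Rabs; destruct Rcase_abs; lra).
    now apply Rmin3_sub_le.
Qed.

End GridEstimates.

Definition holder_const (M : R) : R :=
  2 * cbrt (2 * M) ^ 2 * cbrt (3 * M) + 2 * cbrt M ^ 2 * cbrt (2 * M).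

Lemma holder_const_ge0 M : 0 <= M -> 0 <= holder_const M.
Proof.
  intro HM. unfold holder_const.
  assert (0 <= cbrt (2 * M)) by (apply cbrt_ge0; lra).
  assert (0 <= cbrt (3 * M)) by (apply cbrt_ge0; lra).
  pose proof (pow2_ge_0 (cbrt (2 * M))). pose proof (pow2_ge_0 (cbrt M)).
  apply Rplus_le_le_0_compat; apply Rmult_le_pos; try assumption; apply Rmult_le_pos; lra.
Qed.

Lemma Adelta_sub_A_perturbed K L M h P p Q q :
  0 < K -> 0 < L -> 0 < h <= 1 -> 0 <= P -> 0 <= p <= M -> Rabs q <= M ->
  Rabs (P - p) <= 2 * M * h -> Rabs (Q - q) <= 2 * M * h ^ 2 ->
  Rabs (Adelta K L P Q - A p q)
  <= holder_const M * cbrt h ^ 2 + 3 * M / K ^ 2 + 3 * M / sqrt L.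
Proof.
  intros HK HL Hh HP Hp Hq HPp HQq.
  assert (Hh2 : h ^ 2 <= 1) by (rewrite <- (pow1 2); apply pow_incr; lra).
  assert (HM : 0 <= M) by (pose proof (Rabs_pos q); lra).
  assert (HQ : Rabs Q <= 3 * M).
  { replace Q with (q + (Q - q)) by ring. eapply Rle_trans; [apply Rabs_triang|]. nra. }
  assert (HPM : P <= 3 * M).
  { pose proof (Rle_abs (P - p)). nra. }
  assert (Htrunc : Rabs (Adelta K L P Q - A P Q) <= 3 * M / K ^ 2 + 3 * M / sqrt L).
  { eapply Rle_trans; [now apply Adelta_sub_A|].
    apply Rplus_le_compat; apply Rmult_le_compat_r; try lra;
      apply Rlt_le, Rinv_0_lt_compat; [apply pow_lt|apply sqrt_lt_R0]; lra. }
  set (c := cbrt h). assert (Hc : 0 <= c) by (apply cbrt_ge0; lra).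
  assert (HPp' : cbrt (Rabs (P - p)) ^ 2 <= (cbrt (2 * M) * c) ^ 2).
  { apply pow_incr. split; [apply cbrt_ge0, Rabs_pos|].
    unfold c. rewrite <- cbrt_mul. now apply cbrt_le. }
  assert (HQq' : cbrt (Rabs (Q - q)) <= cbrt (2 * M) * c ^ 2).
  { unfold c. rewrite <- cbrt_pow, <- cbrt_mul. now apply cbrt_le. }
  assert (Hholder : Rabs (A P Q - A p q) <= holder_const M * c ^ 2).
  { eapply Rle_trans; [now apply A_sub_A|]. unfold holder_const.
    assert (H3M : cbrt (Rabs Q) <= cbrt (3 * M)) by now apply cbrt_le.
    assert (HpM : cbrt p ^ 2 <= cbrt M ^ 2)
      by (apply pow_incr; split; [apply cbrt_ge0|apply cbrt_le]; lra).
    assert (0 <= cbrt (Rabs Q)) by apply cbrt_ge0, Rabs_pos.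
    assert (0 <= cbrt (Rabs (Q - q))) by apply cbrt_ge0, Rabs_pos.
    assert (0 <= cbrt (2 * M)) by (apply cbrt_ge0; lra).
    pose proof (pow2_ge_0 (cbrt p)). pose proof (pow2_ge_0 (cbrt (Rabs (P - p)))).
    pose proof (pow2_ge_0 c).
    replace ((2 * cbrt (2 * M) ^ 2 * cbrt (3 * M) + 2 * cbrt M ^ 2 * cbrt (2 * M)) * c ^ 2)
      with (2 * (cbrt (2 * M) * c) ^ 2 * cbrt (3 * M) + 2 * cbrt M ^ 2 * (cbrt (2 * M) * c ^ 2))
      by ring.
    apply Rplus_le_compat; apply Rmult_le_compat; lra. }
  replace (Adelta K L P Q - A p q) with ((Adelta K L P Q - A P Q) + (A P Q - A p q)) by ring.
  eapply Rle_trans; [apply Rabs_triang|]. lra.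
Qed.

Lemma F_scheme_err_at u a b x h M K L :
  smooth_on u a b -> a < x - h -> x + h < b -> 0 < h <= 1 -> 0 < K -> 0 < L ->
  (forall t, x - h <= t <= x + h -> Rabs (Derive_n u 1 t) <= M /\
     Rabs (Derive_n u 2 t) <= M /\ Rabs (Derive_n u 4 t) <= M) ->
  Rabs (F_scheme K L h u x - F1D u x)
  <= holder_const M * cbrt h ^ 2 + 3 * M / K ^ 2 + 3 * M / sqrt L.
Proof.
  intros Hu Ha Hb Hh HK HL HM.
  assert (HM24 : forall t, x - h <= t <= x + h ->
    Rabs (Derive_n u 2 t) <= M /\ Rabs (Derive_n u 4 t) <= M) by (intros t Ht; apply HM, Ht).
  destruct (HM x ltac:(lra)) as [Hp [Hq _]].
  destruct (F_scheme_single_term K L h u x) as [P [HP [HPdef ->]]].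
  rewrite F1D_eq.
  replace (- Adelta K L P (- uxx u h x) - - A (Rabs (Derive_n u 1 x)) (- Derive_n u 2 x))
    with (- (Adelta K L P (- uxx u h x) - A (Rabs (Derive_n u 1 x)) (- Derive_n u 2 x)))
    by ring.
  rewrite Rabs_Ropp. apply Adelta_sub_A_perturbed; try assumption.
  - split; [apply Rabs_pos|assumption].
  - now rewrite Rabs_Ropp.
  - now apply (one_sided_gradient_err u a b).
  - replace (- uxx u h x - - Derive_n u 2 x) with (- (uxx u h x - Derive_n u 2 x)) by ring.
    rewrite Rabs_Ropp. now apply (uxx_err u a b).
Qed.

Lemma Rpower_gt_0 x e : 0 < Rpower x e.
Proof. apply exp_pos. Qed.

Lemma Rpower_le_exponent_contravar h e1 e2 : 0 < h <= 1 -> e1 <= e2 -> Rpower h e2 <= Rpower h e1.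
Proof.
  intros Hh He. unfold Rpower.
  assert (Hln : ln h <= 0) by (rewrite <- ln_1; apply ln_le; lra).
  assert (e2 * ln h <= e1 * ln h) as [Hlt | ->] by nra; [|lra].
  left. now apply exp_increasing.
Qed.

Lemma Rpower_vanishes s eps : 0 < s -> 0 < eps ->
  exists d, 0 < d /\ forall h, 0 < h < d -> Rpower h s < eps.
Proof.
  intros Hs Heps. exists (Rpower eps (/ s)). split; [apply Rpower_gt_0|].
  intros h Hh. rewrite <- (Rpower_1 eps Heps), <- (Rinv_l s), <- Rpower_mult by lra.
  apply Rlt_Rpower_l; [lra|]. split; lra.
Qed.

Lemma Rpower_lower_bound_pos X h c e : 0 < c -> c * Rpower h e <= X -> 0 < X.
Proof. intros Hc HX. pose proof (Rpower_gt_0 h e). nra. Qed.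

Lemma inv_le_of_Rpower_lower_bound X h c e : 0 < c -> c * Rpower h (- e) <= X ->
  / X <= Rpower h e / c.
Proof.
  intros Hc HX. rewrite Rpower_Ropp in HX. pose proof (Rpower_gt_0 h e).
  assert (Hlow : 0 < c * / Rpower h e) by (apply Rmult_lt_0_compat; [|apply Rinv_0_lt_compat]; lra).
  replace (Rpower h e / c) with (/ (c * / Rpower h e)) by (field; split; lra).
  now apply Rinv_le_contravar.
Qed.

Lemma inv_sqr_le_of_Rpower_lower_bound K h c e : 0 < c -> c * Rpower h (- e) <= K ->
  / K ^ 2 <= Rpower h (2 * e) / c ^ 2.
Proof.
  intros Hc HK. pose proof (Rpower_lower_bound_pos K h c (- e) Hc HK).
  replace (2 * e) with (e + e) by ring. rewrite Rpower_plus, <- pow_inv.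
  replace (Rpower h e * Rpower h e / c ^ 2) with ((Rpower h e / c) ^ 2) by (field; lra).
  apply pow_incr. split; [apply Rlt_le, Rinv_0_lt_compat; lra|].
  now apply inv_le_of_Rpower_lower_bound.
Qed.

Lemma inv_sqrt_le_of_Rpower_lower_bound L h c e : 0 < c -> c * Rpower h (- e) <= L ->
  / sqrt L <= Rpower h (e / 2) / sqrt c.
Proof.
  intros Hc HL. pose proof (Rpower_gt_0 h (- e)).
  apply inv_le_of_Rpower_lower_bound; [now apply sqrt_lt_R0|].
  replace (Rpower h (- (e / 2))) with (sqrt (Rpower h (- e))).
  - rewrite <- sqrt_mult by lra. now apply sqrt_le_1_alt.
  - rewrite <- Rpower_sqrt, Rpower_mult by apply Rpower_gt_0. f_equal. field.
Qed.

Definition rate (alpha beta h : R) : R :=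
  Rpower h (1 - alpha) + Rpower h (2 - beta) + Rpower h (Rmin (2 * alpha) (beta / 2)).

(* [h^(2/3)] is dominated by [h^(1-alpha)] when [alpha > 1/3] and by [h^(2 alpha)] otherwise. *)
Lemma rate_dominates alpha beta h : 0 < alpha < 1 -> 0 < h <= 1 ->
  Rpower h (2 / 3) <= rate alpha beta h /\ Rpower h (2 * alpha) <= rate alpha beta h /\
  Rpower h (beta / 2) <= rate alpha beta h.
Proof.
  intros Ha Hh. unfold rate.
  pose proof (Rpower_gt_0 h (1 - alpha)). pose proof (Rpower_gt_0 h (2 - beta)).
  pose proof (Rmin_l (2 * alpha) (beta / 2)). pose proof (Rmin_r (2 * alpha) (beta / 2)).
  set (m := Rmin _ _) in *. pose proof (Rpower_gt_0 h m).
  repeat split.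
  - destruct (Rle_dec alpha (1 / 3)).
    + assert (Rpower h (2 / 3) <= Rpower h m) by (apply Rpower_le_exponent_contravar; lra). lra.
    + assert (Rpower h (2 / 3) <= Rpower h (1 - alpha))
        by (apply Rpower_le_exponent_contravar; lra).
      lra.
  - assert (Rpower h (2 * alpha) <= Rpower h m) by (apply Rpower_le_exponent_contravar; lra). lra.
  - assert (Rpower h (beta / 2) <= Rpower h m) by (apply Rpower_le_exponent_contravar; lra). lra.
Qed.

Lemma rate_vanishes alpha beta eps : 0 < alpha < 1 -> 0 < beta < 2 -> 0 < eps ->
  exists d, 0 < d /\ forall h, 0 < h < d -> rate alpha beta h < eps.
Proof.
  intros Ha Hb Heps.
  assert (Hm : 0 < Rmin (2 * alpha) (beta / 2)) by (apply Rmin_pos; lra).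
  destruct (Rpower_vanishes (1 - alpha) (eps / 3)) as [d1 [Hd1 H1]]; try lra.
  destruct (Rpower_vanishes (2 - beta) (eps / 3)) as [d2 [Hd2 H2]]; try lra.
  destruct (Rpower_vanishes _ (eps / 3) Hm) as [d3 [Hd3 H3]]; [lra|].
  exists (Rmin d1 (Rmin d2 d3)). split; [now repeat apply Rmin_pos|].
  intros h Hh. pose proof (Rmin_l d1 (Rmin d2 d3)). pose proof (Rmin_r d1 (Rmin d2 d3)).
  pose proof (Rmin_l d2 d3). pose proof (Rmin_r d2 d3).
  unfold rate. specialize (H1 h ltac:(lra)). specialize (H2 h ltac:(lra)).
  specialize (H3 h ltac:(lra)). lra.
Qed.

Lemma rate_optimal h : rate (1 / 3) (4 / 3) h = 3 * Rpower h (2 / 3).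
Proof.
  unfold rate.
  replace (1 - 1 / 3) with (2 / 3) by field. replace (2 - 4 / 3) with (2 / 3) by field.
  replace (Rmin (2 * (1 / 3)) (4 / 3 / 2)) with (2 / 3) by (rewrite Rmin_left; lra).
  ring.
Qed.

Lemma smooth_on_continuity_pt u a b k t :
  smooth_on u a b -> a < t < b -> continuity_pt (Derive_n u k) t.
Proof.
  intros Hu Ht. apply continuity_pt_filterlim, (ex_derive_continuous (Derive_n u k)).
  now apply Hu.
Qed.

Lemma smooth_on_Derive_n_bounded u a b c d k : smooth_on u a b -> a < c -> c <= d -> d < b ->
  exists M, forall t, c <= t <= d -> Rabs (Derive_n u k t) <= M.
Proof.
  intros Hu Hac Hcd Hdb.
  destruct (continuity_ab_maj (fun t => Rabs (Derive_n u k t)) c d Hcd) as [m [Hm _]].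
  - intros t Ht. apply (continuity_pt_comp (Derive_n u k) Rabs).
    + apply (smooth_on_continuity_pt u a b); [assumption|lra].
    + apply Rcontinuity_abs.
  - exists (Rabs (Derive_n u k m)). exact Hm.
Qed.

Lemma smooth_on_derivatives_bounded u a b c d : smooth_on u a b -> a < c -> c <= d -> d < b ->
  exists M, forall t, c <= t <= d -> Rabs (Derive_n u 1 t) <= M /\
    Rabs (Derive_n u 2 t) <= M /\ Rabs (Derive_n u 4 t) <= M.
Proof.
  intros Hu Hac Hcd Hdb.
  destruct (smooth_on_Derive_n_bounded u a b c d 1) as [M1 H1]; try assumption.
  destruct (smooth_on_Derive_n_bounded u a b c d 2) as [M2 H2]; try assumption.
  destruct (smooth_on_Derive_n_bounded u a b c d 4) as [M4 H4]; try assumption.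
  exists (Rmax M1 (Rmax M2 M4)). intros t Ht.
  pose proof (Rmax_l M1 (Rmax M2 M4)). pose proof (Rmax_r M1 (Rmax M2 M4)).
  pose proof (Rmax_l M2 M4). pose proof (Rmax_r M2 M4).
  specialize (H1 t Ht). specialize (H2 t Ht). specialize (H4 t Ht). lra.
Qed.

Lemma error_bound_le_rate alpha beta h M cK cL K L :
  0 < alpha < 1 -> 0 < h <= 1 -> 0 <= M -> 0 < cK -> 0 < cL ->
  cK * Rpower h (- alpha) <= K -> cL * Rpower h (- beta) <= L ->
  holder_const M * cbrt h ^ 2 + 3 * M / K ^ 2 + 3 * M / sqrt L
  <= (holder_const M + 3 * M / cK ^ 2 + 3 * M / sqrt cL) * rate alpha beta h.
Proof.
  intros Ha Hh HM HcK HcL HK HL.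
  destruct (rate_dominates alpha beta h Ha Hh) as [R1 [R2 R3]].
  rewrite cbrt_sqr_Rpower by lra. rewrite !Rmult_plus_distr_r.
  apply Rplus_le_compat; [apply Rplus_le_compat|].
  - apply Rmult_le_compat_l; [now apply holder_const_ge0|assumption].
  - apply Rle_trans with (3 * M * (Rpower h (2 * alpha) / cK ^ 2)).
    + apply Rmult_le_compat_l; [lra|]. now apply inv_sqr_le_of_Rpower_lower_bound.
    + replace (3 * M * (Rpower h (2 * alpha) / cK ^ 2))
        with (3 * M / cK ^ 2 * Rpower h (2 * alpha)) by (field; lra).
      apply Rmult_le_compat_l; [apply Rdiv_le_0_compat; [|apply pow_lt]; lra|assumption].
  - assert (HcL' : 0 < sqrt cL) by now apply sqrt_lt_R0.
    apply Rle_trans with (3 * M * (Rpower h (beta / 2) / sqrt cL)).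
    + apply Rmult_le_compat_l; [lra|]. now apply inv_sqrt_le_of_Rpower_lower_bound.
    + replace (3 * M * (Rpower h (beta / 2) / sqrt cL))
        with (3 * M / sqrt cL * Rpower h (beta / 2)) by (field; lra).
      apply Rmult_le_compat_l; [apply Rdiv_le_0_compat; lra|assumption].
Qed.

Lemma uniform_accuracy alpha beta (K L : R -> R) phi r :
  0 < alpha < 1 -> 0 < beta < 2 ->
  (exists cK CK cL CL h0 : R,
     0 < cK /\ 0 < CK /\ 0 < cL /\ 0 < CL /\ 0 < h0 /\
     forall h, 0 < h < h0 ->
       cK * Rpower h (- alpha) <= K h <= CK * Rpower h (- alpha) /\
       cL * Rpower h (- beta) <= L h <= CL * Rpower h (- beta) /\
       1 <= K h * sqrt (L h)) ->
  0 < r -> smooth_on phi (-1 - r) (1 + r) ->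
  exists C h1, 0 < C /\ 0 < h1 /\
    forall h x, 0 < h < h1 -> -1 < x < 1 ->
      Rabs (F_scheme (K h) (L h) h phi x - F1D phi x) <= C * rate alpha beta h.
Proof.
  intros Ha Hb [cK [CK [cL [CL [h0 [HcK [_ [HcL [_ [Hh0 HKL]]]]]]]]]] Hr Hphi.
  destruct (smooth_on_derivatives_bounded phi (-1 - r) (1 + r) (-1 - r / 2) (1 + r / 2))
    as [M HM]; try assumption; try lra.
  assert (HM0 : 0 <= M)
    by (pose proof (Rabs_pos (Derive_n phi 1 0)); pose proof (HM 0 ltac:(lra)); lra).
  set (C := holder_const M + 3 * M / cK ^ 2 + 3 * M / sqrt cL).
  assert (HC : 0 <= C).
  { pose proof (holder_const_ge0 M HM0). unfold C.
    assert (0 <= 3 * M / cK ^ 2) by (apply Rdiv_le_0_compat; [|apply pow_lt]; lra).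
    assert (0 <= 3 * M / sqrt cL) by (apply Rdiv_le_0_compat; [|apply sqrt_lt_R0]; lra).
    lra. }
  exists (C + 1), (Rmin (Rmin 1 (r / 2)) h0). split; [lra|].
  split; [repeat apply Rmin_pos; lra|]. intros h x Hh Hx.
  pose proof (Rmin_l (Rmin 1 (r / 2)) h0). pose proof (Rmin_r (Rmin 1 (r / 2)) h0).
  pose proof (Rmin_l 1 (r / 2)). pose proof (Rmin_r 1 (r / 2)).
  destruct (HKL h ltac:(lra)) as [[HK _] [[HL _] _]].
  assert (Hrate : 0 <= rate alpha beta h).
  { pose proof (Rpower_gt_0 h (2 / 3)).
    pose proof (rate_dominates alpha beta h Ha ltac:(lra)). lra. }
  eapply Rle_trans.
  - apply (F_scheme_err_at phi (-1 - r) (1 + r)); try lra.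
    + assumption.
    + now apply (Rpower_lower_bound_pos _ h cK (- alpha)).
    + now apply (Rpower_lower_bound_pos _ h cL (- beta)).
    + intros t Ht. apply HM. lra.
  - eapply Rle_trans; [apply (error_bound_le_rate alpha beta h M cK cL); try assumption; lra|].
    fold C. nra.
Qed.

Lemma continuity_pt_F1D u a b x : smooth_on u a b -> a < x < b -> continuity_pt (F1D u) x.
Proof.
  intros Hu Hx.
  assert (HD : forall k, continuity_pt (Derive_n u k) x)
    by (intro k; now apply (smooth_on_continuity_pt u a b)).
  apply (continuity_pt_comp (fun y => Derive_n u 1 y ^ 2 * Derive_n u 2 y) cbrt);
    [|apply continuity_cbrt].
  apply continuity_pt_mult; [|apply HD].
  apply (continuity_pt_ext (fun y => Derive_n u 1 y * Derive_n u 1 y)); [intro; ring|].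
  apply continuity_pt_mult; apply HD.
Qed.

Lemma consistency_of_uniform_error (G : R -> R -> R) (F rho : R -> R) (a b x C h1 : R) :
  a < x < b -> continuity_pt F x -> 0 <= C -> 0 < h1 ->
  (forall eps, 0 < eps -> exists d, 0 < d /\ forall h, 0 < h < d -> rho h < eps) ->
  (forall h y, 0 < h < h1 -> a < y < b -> Rabs (G h y - F y) <= C * rho h) ->
  forall eps, 0 < eps -> exists delta, 0 < delta /\
    forall h y, 0 < h < delta -> Rabs (y - x) < delta -> Rabs (G h y - F x) < eps.
Proof.
  intros Hx HF HC Hh1 Hrho Herr eps Heps.
  destruct (proj1 (continuity_pt_locally F x) HF (mkposreal (eps / 2) ltac:(lra)))
    as [[d0 Hd0] Hcont].
  destruct (Hrho (eps / (2 * (C + 1)))) as [d1 [Hd1 Hsmall]];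
    [apply Rdiv_lt_0_compat; lra|].
  set (delta := Rmin d0 (Rmin d1 (Rmin h1 (Rmin (x - a) (b - x))))).
  assert (Hdelta : delta <= d0 /\ delta <= d1 /\ delta <= h1 /\ delta <= x - a /\ delta <= b - x).
  { unfold delta. pose proof (Rmin_l d0 (Rmin d1 (Rmin h1 (Rmin (x - a) (b - x))))).
    pose proof (Rmin_r d0 (Rmin d1 (Rmin h1 (Rmin (x - a) (b - x))))).
    pose proof (Rmin_l d1 (Rmin h1 (Rmin (x - a) (b - x)))).
    pose proof (Rmin_r d1 (Rmin h1 (Rmin (x - a) (b - x)))).
    pose proof (Rmin_l h1 (Rmin (x - a) (b - x))). pose proof (Rmin_r h1 (Rmin (x - a) (b - x))).
    pose proof (Rmin_l (x - a) (b - x)). pose proof (Rmin_r (x - a) (b - x)). lra. }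
  exists delta. split; [unfold delta; repeat apply Rmin_pos; lra|].
  intros h y Hh Hy.
  assert (Hy' : a < y < b) by (apply Rabs_def2 in Hy; lra).
  assert (HFy : Rabs (F y - F x) < eps / 2) by (apply Hcont; change (Rabs (y - x) < d0); lra).
  assert (HGy : Rabs (G h y - F y) < eps / 2).
  { eapply Rle_lt_trans; [apply Herr; [lra|assumption]|].
    apply Rle_lt_trans with (C * (eps / (2 * (C + 1)))).
    - apply Rmult_le_compat_l; [assumption|]. apply Rlt_le, Hsmall. lra.
    - apply (Rmult_lt_reg_r (2 * (C + 1))); [lra|].
      replace (C * (eps / (2 * (C + 1))) * (2 * (C + 1))) with (C * eps) by (field; lra). nra. }
  replace (G h y - F x) with ((G h y - F y) + (F y - F x)) by ring.
  eapply Rle_lt_trans; [apply Rabs_triang|]. lra.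
Qed.

Lemma order_optimal : order (1 / 3) (4 / 3) = 2 / 3 /\
  forall a b, 0 < a < 1 -> 0 < b < 2 ->
    order a b <= order (1 / 3) (4 / 3) /\
    (order a b = order (1 / 3) (4 / 3) -> a = 1 / 3 /\ b = 4 / 3).
Proof.
  assert (E : order (1 / 3) (4 / 3) = 2 / 3) by (unfold order, Rmin; repeat destruct Rle_dec; lra).
  split; [exact E|]. intros a b Ha Hb. rewrite E. unfold order.
  pose proof (Rmin_l (Rmin (1 - a) (2 - b)) (Rmin (2 * a) (b / 2))).
  pose proof (Rmin_r (Rmin (1 - a) (2 - b)) (Rmin (2 * a) (b / 2))).
  pose proof (Rmin_l (1 - a) (2 - b)). pose proof (Rmin_r (1 - a) (2 - b)).
  pose proof (Rmin_l (2 * a) (b / 2)). pose proof (Rmin_r (2 * a) (b / 2)).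
  split; [destruct (Rle_dec a (1 / 3)); lra|intros; split; lra].
Qed.

Theorem mainTheorem11
  (alpha beta : R) (K L : R -> R) (phi : R -> R) (r : R) :
  0 < alpha < 1 -> 0 < beta < 2 ->
  (* K = Theta(h^-alpha), L = Theta(h^-beta), K sqrt L >= 1, for small h *)
  (exists cK CK cL CL h0 : R,
     0 < cK /\ 0 < CK /\ 0 < cL /\ 0 < CL /\ 0 < h0 /\
     forall h, 0 < h < h0 ->
       cK * Rpower h (- alpha) <= K h <= CK * Rpower h (- alpha) /\
       cL * Rpower h (- beta) <= L h <= CL * Rpower h (- beta) /\
       1 <= K h * sqrt (L h)) ->
  (* phi smooth on a neighborhood of the closed domain [-1,1] *)
  0 < r -> smooth_on phi (-1 - r) (1 + r) ->
  (* consistency *)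
  (forall x, -1 < x < 1 ->
     forall eps, 0 < eps -> exists delta, 0 < delta /\
       forall h y, 0 < h < delta -> Rabs (y - x) < delta ->
         Rabs (F_scheme (K h) (L h) h phi y - F1D phi x) < eps) /\
  (* accuracy, uniformly over the points x of Omega = (-1,1) *)
  (exists C h1, 0 < C /\ 0 < h1 /\
     forall h x, 0 < h < h1 -> -1 < x < 1 ->
       Rabs (F_scheme (K h) (L h) h phi x - F1D phi x)
       <= C * (Rpower h (1 - alpha) + Rpower h (2 - beta)
               + Rpower h (Rmin (2 * alpha) (beta / 2)))) /\
  (* optimal choice of exponents *)
  (order (1/3) (4/3) = 2/3 /\
   forall a b, 0 < a < 1 -> 0 < b < 2 ->
     order a b <= order (1/3) (4/3) /\
     (order a b = order (1/3) (4/3) -> a = 1/3 /\ b = 4/3)) /\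
  (* in the optimal case the accuracy is O(h^{2/3}) *)
  (alpha = 1/3 -> beta = 4/3 ->
   exists C h1, 0 < C /\ 0 < h1 /\
     forall h x, 0 < h < h1 -> -1 < x < 1 ->
       Rabs (F_scheme (K h) (L h) h phi x - F1D phi x) <= C * Rpower h (2/3)).
Proof.
  intros Ha Hb HKL Hr Hphi.
  destruct (uniform_accuracy alpha beta K L phi r Ha Hb HKL Hr Hphi)
    as [C [h1 [HC [Hh1 Hacc]]]].
  split; [|split; [now exists C, h1|split; [exact order_optimal|]]].
  - intros x Hx.
    apply (consistency_of_uniform_error (fun h y => F_scheme (K h) (L h) h phi y) (F1D phi)
             (rate alpha beta) (-1) 1 x C h1); try assumption; try lra.
    + apply (continuity_pt_F1D phi (-1 - r) (1 + r)); [assumption|lra].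
    + intros eps Heps. now apply rate_vanishes.
  - intros -> ->. exists (3 * C), h1. repeat split; try lra; try assumption.
    intros h x Hh Hx.
    replace (3 * C * Rpower h (2 / 3)) with (C * (3 * Rpower h (2 / 3))) by ring.
    rewrite <- rate_optimal. now apply Hacc.
Qed.
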